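(* There is an infinite family of undirected graphs (with unit edge lengths) such that, with $n$ the number of vertices, the minimum size of a hierarchical hub labeling is $\Omega(\sqrt n)$ times larger than the minimum size of a hub labeling.
   Context: A hub labeling of an undirected graph $G=(V,E)$, $n=|V|$, assigns to each vertex $v$ a set $L(v)\subseteq V$ such that for every pair $u,w$ (including $u=w$), $L(u)\cap L(w)$ contains a vertex on some shortest $u$–$w$ path; its size is $\sum_v|L(v)|$. It is hierarchical if there is a bijection $\pi:V\to\{1,\dots,n\}$ such that $u\in L(v)$ implies $\pi(u)\le\pi(v)$. *)

From mathcomp Require Import all_boot all_order all_algebra.
From mathcomp Require Import reals.
Set Implicit Arguments. Unset Strict Implicit. Unset Printing Implicit Defensive.
Import Order.TTheory GRing.Theory Num.Theory.

Definition simple_graph (n : nat) (e : rel 'I_n) : Prop :=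
  symmetric e /\ irreflexive e.

(* A u-w walk: a sequence p with u :: p an e-path ending at w; its length
   (number of edges) is size p. *)
Definition is_walk n (e : rel 'I_n) (u w : 'I_n) (p : seq 'I_n) : Prop :=
  path e u p /\ last u p = w.

Definition is_shortest_path n (e : rel 'I_n) (u w : 'I_n) (p : seq 'I_n) : Prop :=
  is_walk e u w p /\ forall q, is_walk e u w q -> size p <= size q.

Definition on_shortest_path n (e : rel 'I_n) (u w h : 'I_n) : Prop :=
  exists p, is_shortest_path e u w p /\ h \in u :: p.

Definition is_hub_labeling n (e : rel 'I_n) (L : 'I_n -> {set 'I_n}) : Prop :=
  forall u w : 'I_n, exists h, h \in L u :&: L w /\ on_shortest_path e u w h.

Definition labeling_size n (L : 'I_n -> {set 'I_n}) : nat :=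
  \sum_(v : 'I_n) #|L v|.

(* Hierarchical: there is a bijection pi : V -> {0,..,n-1} (i.e. {1..n}
   shifted) with u \in L v -> pi u <= pi v. *)
Definition is_hierarchical n (L : 'I_n -> {set 'I_n}) : Prop :=
  exists pi : 'I_n -> 'I_n, bijective pi /\
    forall u v, u \in L v -> pi u <= pi v.

Definition min_HL_size n (e : rel 'I_n) (k : nat) : Prop :=
  (exists L, is_hub_labeling e L /\ labeling_size L = k) /\
  (forall L, is_hub_labeling e L -> k <= labeling_size L).

Definition min_HHL_size n (e : rel 'I_n) (k : nat) : Prop :=
  (exists L, is_hub_labeling e L /\ is_hierarchical L /\ labeling_size L = k) /\
  (forall L, is_hub_labeling e L -> is_hierarchical L -> k <= labeling_size L).

From mathcomp Require Import all_boot all_order all_algebra.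
From mathcomp Require Import reals.
From mathcomp Require Import zify ring.
From Stdlib Require Import Classical Wf_nat.
Import Order.TTheory GRing.Theory Num.Theory.
Set Implicit Arguments. Unset Strict Implicit. Unset Printing Implicit Defensive.

(* The graphs are the point-line incidence graphs of the affine planes over F_p
   with vertical lines removed: n = 2p^2 vertices, p-regular, bipartite and
   without 4-cycles.  Labeling every vertex by itself, its p neighbours and p
   further "far hubs" gives a hub labeling of size O(p^3) = O(n^(3/2)).
   Conversely, let L be hierarchical with ranking pi.  For an edge xu with
   pi u < pi x and another neighbour w of x, the only shortest u-w path is
   u x w, and x is not a hub of u; hence w is in L u or u is in L w.  There
   are n p (p-1) / 2 such triples (x, u, w), and a label pair arises from at
   most two of them, so L has size at least n p (p-1) / 4 = Omega(n^2). *)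

Section Walks.
Variables (n : nat) (e : rel 'I_n).

Lemma walk_nil u w : is_walk e u w [::] -> u = w.
Proof. by case. Qed.

Lemma walk1_edge u w p : is_walk e u w p -> size p = 1%N -> e u w.
Proof. by case: p => [|x [|y q]] //= [/andP[eux _] <-]. Qed.

Lemma walk2_middle u w p : is_walk e u w p -> size p = 2%N ->
  exists x, [/\ p = [:: x; w], e u x & e x w].
Proof. by case: p => [|x [|y [|z q]]] //= [/and3P[eux exy _] <-] _; exists x. Qed.

Lemma walk_size_gt0 u w p : u != w -> is_walk e u w p -> (0 < size p)%N.
Proof. by move=> neq_uw; case: p => // /walk_nil eq_uw; rewrite eq_uw eqxx in neq_uw. Qed.

Lemma walk_size_gt1 u w p : u != w -> ~~ e u w -> is_walk e u w p -> (1 < size p)%N.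
Proof.
move=> neq_uw not_euw wp; have := walk_size_gt0 neq_uw wp.
by case: p wp => [|x [|y q]] // /walk1_edge/(_ erefl) euw; rewrite euw in not_euw.
Qed.

Variable c : 'I_n -> bool.
Hypothesis c_proper : forall a b, e a b -> c a != c b.

Lemma odd_walk p u w : is_walk e u w p -> odd (size p) = (c u != c w).
Proof.
elim: p u => [|x p IHp] u; first by move=> /walk_nil ->; rewrite eqxx.
case=> /= /andP[eux px] lastp; rewrite (IHp x) //; move: (c_proper eux).
by case: (c u); case: (c x); case: (c w).
Qed.

Lemma walk_size_gt2 u w p : u != w -> ~~ e u w -> c u != c w ->
  is_walk e u w p -> (2 < size p)%N.
Proof.
move=> neq_uw not_euw cuw wp; have := walk_size_gt1 neq_uw not_euw wp.
by have := odd_walk wp; rewrite cuw; case: p wp => [|x [|y [|z q]]].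
Qed.

Lemma walk_size_gt3 u w p : u != w -> c u = c w ->
  (forall x, e u x -> e x w -> False) -> is_walk e u w p -> (3 < size p)%N.
Proof.
move=> neq_uw cuw no_mid wp.
have not_euw : ~~ e u w by apply/negP => /c_proper; rewrite cuw eqxx.
have := walk_size_gt1 neq_uw not_euw wp; have := odd_walk wp; rewrite cuw eqxx.
case: p wp => [|x [|y [|z [|t q]]]] // wp _ _.
by have [x' [_ eux' ex'w]] := walk2_middle wp erefl; case: (no_mid x').
Qed.

End Walks.

Lemma on_shortest_path_unique_middle n (e : rel 'I_n) u x w h :
  symmetric e -> u != w -> ~~ e u w ->
  e u x -> e x w -> (forall y, e u y -> e y w -> y = x) ->
  on_shortest_path e u w h -> h \in [:: u; x; w].
Proof.
move=> e_sym neq_uw not_euw eux exw uniq_mid [p [[wp min_p] hp]].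
have := min_p [:: x; w]; rewrite /is_walk /= eux exw => /(_ (conj erefl erefl)).
case: p wp hp {min_p} => [|y [|z [|t q]]] // wp hp _.
- by rewrite (walk_nil wp) eqxx in neq_uw.
- by rewrite (walk1_edge wp erefl) in not_euw.
- have [y' [[<- ezw] euy yw]] := walk2_middle wp erefl.
  by rewrite ezw (uniq_mid y euy yw) in hp.
Qed.

Lemma card_set_dep_pair (I J : finType) (P : pred I) (Q : I -> pred J) :
  #|[set ab : I * J | P ab.1 && Q ab.1 ab.2]| = (\sum_(a | P a) #|[set b | Q a b]|)%N.
Proof.
rewrite -sum1dep_card -(pair_big_dep P Q (fun _ _ => 1%N)) /=.
by apply: eq_bigr => a _; rewrite sum1dep_card.
Qed.

Lemma labeling_size_pairs n (L : 'I_n -> {set 'I_n}) :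
  labeling_size L = #|[set ab : 'I_n * 'I_n | ab.2 \in L ab.1]|.
Proof.
rewrite (card_set_dep_pair predT (fun a b => b \in L a)).
by apply: eq_bigr => a _; apply: eq_card => b; rewrite inE.
Qed.

Section HierarchicalLowerBound.
Variables (n d : nat) (e : rel 'I_n).
Hypotheses (e_sym : symmetric e) (e_irr : irreflexive e).
Hypothesis e_triangle_free : forall x u w, e x u -> e x w -> ~~ e u w.
Hypothesis e_C4_free :
  forall x y u w, e x u -> e x w -> e y u -> e y w -> u != w -> x = y.
Hypothesis e_regular : forall x, #|[set y | e x y]| = d.
Variables (L : 'I_n -> {set 'I_n}) (pi : 'I_n -> 'I_n).
Hypotheses (L_hub : is_hub_labeling e L) (pi_inj : injective pi).
Hypothesis L_pi : forall u v, u \in L v -> pi u <= pi v.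

Definition down_edges := [set xu : 'I_n * 'I_n | e xu.1 xu.2 && (pi xu.2 < pi xu.1)].

Definition down_cherries := [set t : ('I_n * 'I_n) * 'I_n |
  (t.1 \in down_edges) && (e t.1.1 t.2 && (t.1.2 != t.2))].

Lemma card_down_edges : (2 * #|down_edges| = n * d)%N.
Proof.
pose swap (xu : 'I_n * 'I_n) := (xu.2, xu.1).
have swap_inj : injective swap by move=> [? ?] [? ?] [-> ->].
pose edges := [set xu : 'I_n * 'I_n | predT xu.1 && e xu.1 xu.2].
have card_edges : #|edges| = (n * d)%N.
  by rewrite card_set_dep_pair (eq_bigr (fun _ => d)) ?sum_nat_const ?card_ord.
have down_sub : edges :&: down_edges = down_edges.
  by apply/setIidPr/subsetP => -[x u]; rewrite !inE => /andP[].
have up_swap : edges :\: down_edges = swap @: down_edges.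
  apply/setP => -[u x]; rewrite !inE /=.
  rewrite -[(u, x)]/(swap (x, u)) (mem_imset _ _ swap_inj) !inE /= e_sym.
  case exu: (e x u) => //=; rewrite -leqNgt leq_eqVlt andbT.
  case: eqP => [eq_pi | //].
  by rewrite (pi_inj (val_inj eq_pi)) e_irr in exu.
have := cardsID down_edges edges.
rewrite down_sub up_swap card_imset // card_edges; lia.
Qed.

Lemma card_down_cherries : #|down_cherries| = (#|down_edges| * d.-1)%N.
Proof.
rewrite (card_set_dep_pair (fun xu => xu \in down_edges) (fun xu w => e xu.1 w && (xu.2 != w))).
rewrite -sum_nat_const; apply: eq_bigr => -[x u]; rewrite inE /= => /andP[exu _].
rewrite -(e_regular x) (cardsD1 u) inE exu /=.
by apply: eq_card => w; rewrite !inE andbC eq_sym.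
Qed.

(* The only shortest u-w path is u x w, and x is not a hub of u since pi u < pi x. *)
Lemma down_cherry_label x u w : ((x, u), w) \in down_cherries ->
  (w \in L u) || (u \in L w).
Proof.
rewrite !inE /= => /andP[/andP[exu pi_ux] /andP[exw neq_uw]].
have uniq_mid y : e u y -> e y w -> y = x.
  by move=> euy eyw; apply: (e_C4_free _ eyw exu exw neq_uw); rewrite e_sym.
have [h [hL hsp]] := L_hub u w; move: hL; rewrite inE => /andP[hLu hLw].
have eux : e u x by rewrite e_sym.
have := on_shortest_path_unique_middle e_sym neq_uw (e_triangle_free exu exw)
  eux exw uniq_mid hsp.
rewrite !inE => /or3P[] /eqP eq_h; subst h; rewrite ?hLw ?hLu ?orbT //.
by have := L_pi hLu; rewrite leqNgt pi_ux.
Qed.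

Lemma card_down_cherries_le : (#|down_cherries| <= 2 * labeling_size L)%N.
Proof.
pose T1 := down_cherries :&: [set t | t.2 \in L t.1.2].
pose T2 := down_cherries :&: [set t | t.1.2 \in L t.2].
have cover : down_cherries \subset T1 :|: T2.
  apply/subsetP => -[[x u] w] t_in.
  by rewrite in_setU !in_setI t_in !inE /= (down_cherry_label t_in).
have ends_inj : {in down_cherries &, injective (fun t => (t.1.2, t.2))}.
  move=> [[x u] w] [[y u'] w']; rewrite !inE /= => /andP[/andP[exu _] /andP[exw neq_uw]].
  move=> /andP[/andP[eyu _] /andP[eyw _]] [eu ew]; subst u' w'.
  by rewrite (e_C4_free exu exw eyu eyw neq_uw).
have card_T (T : {set ('I_n * 'I_n) * 'I_n}) (f : 'I_n * 'I_n -> 'I_n * 'I_n) :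
    injective f -> T \subset down_cherries ->
    {in T, forall t, f (t.1.2, t.2) \in [set ab | ab.2 \in L ab.1]} ->
    (#|T| <= labeling_size L)%N.
  move=> f_inj sub_T fT; rewrite labeling_size_pairs.
  rewrite -(@card_in_imset _ _ (fun t => f (t.1.2, t.2))); last first.
    by move=> t1 t2 /(subsetP sub_T) t1_in /(subsetP sub_T) t2_in /f_inj; apply: ends_inj.
  by apply/subset_leq_card/subsetP => _ /imsetP[t t_in ->]; apply: fT.
have swap_inj : injective (fun ab : 'I_n * 'I_n => (ab.2, ab.1)) by move=> [? ?] [? ?] [-> ->].
have leT1 : (#|T1| <= labeling_size L)%N.
  by apply: (card_T _ id (@inj_id _) (subsetIl _ _)) => t; rewrite in_setI !inE => /andP[].
have leT2 : (#|T2| <= labeling_size L)%N.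
  by apply: (card_T _ _ swap_inj (subsetIl _ _)) => t; rewrite in_setI !inE => /andP[].
have := subset_leq_card cover; have := cardsU T1 T2; lia.
Qed.

End HierarchicalLowerBound.

Lemma hierarchical_labeling_size_ge n d (e : rel 'I_n) :
  symmetric e -> irreflexive e ->
  (forall x u w, e x u -> e x w -> ~~ e u w) ->
  (forall x y u w, e x u -> e x w -> e y u -> e y w -> u != w -> x = y) ->
  (forall x, #|[set y | e x y]| = d) ->
  forall L, is_hub_labeling e L -> is_hierarchical L ->
  (n * d * d.-1 <= 4 * labeling_size L)%N.
Proof.
move=> e_sym e_irr e_tf e_C4 e_reg L L_hub [pi [/bij_inj pi_inj L_pi]].
have := card_down_cherries_le e_sym e_tf e_C4 L_hub L_pi.
rewrite (card_down_cherries e_reg) -(card_down_edges e_sym e_irr e_reg pi_inj).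
lia.
Qed.

Lemma ex_minimal (P : nat -> Prop) :
  (exists k, P k) -> exists k, P k /\ forall j, P j -> (k <= j)%N.
Proof.
move=> exP; have [k [[Pk min_k] _]] :=
  @dec_inh_nat_subset_has_unique_least_element P (fun j => classic (P j)) exP.
by exists k; split=> // j /min_k /ssrnat.leP.
Qed.

Lemma min_HL_size_exists n (e : rel 'I_n) L0 :
  is_hub_labeling e L0 -> exists k, min_HL_size e k.
Proof.
move=> L0_hub.
have [k [[L [L_hub <-]] min_k]] :=
  @ex_minimal (fun k => exists L, is_hub_labeling e L /\ labeling_size L = k)
    (ex_intro _ _ (ex_intro _ L0 (conj L0_hub erefl))).
by exists (labeling_size L); split=> [|L' L'_hub]; [exists L | apply: min_k; exists L'].
Qed.

Definition rank_labeling n (v : 'I_n) : {set 'I_n} := [set u : 'I_n | (u <= v)%N].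

(* L0 only supplies a shortest u-w path; its smaller endpoint is a common hub. *)
Lemma rank_labeling_hub n (e : rel 'I_n) L0 :
  is_hub_labeling e L0 -> is_hub_labeling e (@rank_labeling n).
Proof.
move=> L0_hub u w; have [_ [_ [q [q_short _]]]] := L0_hub u w.
exists (if (u <= w)%N then u else w); split.
  by case: leqP => le_uw; rewrite !inE ?leqnn ?le_uw ?(ltnW le_uw).
exists q; split=> //; case: leqP => _; first exact: mem_head.
by case: q_short => -[_ <-] _; apply: mem_last.
Qed.

Lemma rank_labeling_hierarchical n : is_hierarchical (@rank_labeling n).
Proof. by exists id; split=> [|u v]; [exists id | rewrite inE]. Qed.

Lemma min_HHL_size_exists n (e : rel 'I_n) L0 :
  is_hub_labeling e L0 -> exists k, min_HHL_size e k.
Proof.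
move=> /rank_labeling_hub L0_hub.
have [k [[L [L_hub L_hier <-]] min_k]] :=
  @ex_minimal
    (fun k => exists L, [/\ is_hub_labeling e L, is_hierarchical L & labeling_size L = k])
    (ex_intro _ _ (ex_intro _ _ (And3 L0_hub (@rank_labeling_hierarchical n) erefl))).
exists (labeling_size L); split=> [|L' L'_hub L'_hier]; first by exists L.
by apply: min_k; exists L'; split.
Qed.

Section OrdinalGraph.
Variables (T : finType) (r : rel T).

Definition ord_rel : rel 'I_#|T| := fun i j => r (enum_val i) (enum_val j).

Definition ord_labeling (L : T -> {set T}) (i : 'I_#|T|) : {set 'I_#|T|} :=
  [set j | enum_val j \in L (enum_val i)].

Lemma ord_rel_rank s t : ord_rel (enum_rank s) (enum_rank t) = r s t.
Proof. by rewrite /ord_rel !enum_rankK. Qed.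

Lemma walk_ord_rel s t q : path r s q -> last s q = t ->
  is_walk ord_rel (enum_rank s) (enum_rank t) (map enum_rank q).
Proof.
move=> rq <-; split; last by rewrite last_map.
by elim: q s rq => //= x q IHq s /andP[rsx rq]; rewrite ord_rel_rank rsx IHq.
Qed.

Lemma card_enum_val_preim (A : {set T}) : #|[set j : 'I_#|T| | enum_val j \in A]| = #|A|.
Proof.
have -> : [set j | enum_val j \in A] = enum_rank @: A.
  apply/setP => j; rewrite inE; apply/idP/imsetP => [j_in | [t t_in ->]].
    by exists (enum_val j); rewrite ?enum_valK.
  by rewrite enum_rankK.
by apply: card_imset; apply: enum_rank_inj.
Qed.

Definition hub_between (L : T -> {set T}) s t h :=
  h \in L s :&: L t /\ exists q, [/\ path r s q, last s q = t, h \in s :: q &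
    forall q', is_walk ord_rel (enum_rank s) (enum_rank t) q' -> (size q <= size q')%N].

Lemma ord_labeling_hub L : (forall s t, exists h, hub_between L s t h) ->
  is_hub_labeling ord_rel (ord_labeling L).
Proof.
move=> hubs u w; rewrite -(enum_valK u) -(enum_valK w).
have [h [hL [q [rq last_q hq min_q]]]] := hubs (enum_val u) (enum_val w).
exists (enum_rank h); split; first by move: hL; rewrite !inE !enum_rankK.
exists (map enum_rank q); split; last by rewrite -map_cons map_f.
by split=> [|q' /min_q]; [apply: walk_ord_rel | rewrite size_map].
Qed.

End OrdinalGraph.

Lemma nonvertical_lines_meet_once (F : fieldType) (m1 c1 m2 c2 a a' : F) :
  (m1 * a + c1 = m2 * a + c2)%R -> (m1 * a' + c1 = m2 * a' + c2)%R ->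
  (m1 = m2 /\ c1 = c2) \/ a = a'.
Proof.
move=> meet_a meet_a'.
have : ((m1 - m2) * (a - a') = 0)%R.
  have -> : ((m1 - m2) * (a - a') =
      ((m1 * a + c1) - (m2 * a + c2)) - ((m1 * a' + c1) - (m2 * a' + c2)))%R by ring.
  by rewrite meet_a meet_a' !subrr.
move/eqP; rewrite mulf_eq0 !subr_eq0 => /orP[/eqP eq_m | /eqP]; [left | by right].
by split=> //; apply: (addrI (m1 * a)%R); rewrite meet_a eq_m.
Qed.

Section AffinePlane.
Variable p : nat.
Hypothesis p_prime : prime p.

(* [inl (a, b)] is the point (a, b) and [inr (m, c)] the line y = m x + c of the
   affine plane over F_p; vertical lines are left out. *)
Definition vertex : finType := (('F_p * 'F_p) + ('F_p * 'F_p))%type.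

Definition incident (s t : vertex) : bool :=
  match s, t with
  | inl (a, b), inr (m, c) | inr (m, c), inl (a, b) => b == (m * a + c)%R
  | _, _ => false
  end.

Definition is_point (s : vertex) : bool := if s is inl _ then true else false.

Lemma incident_sym : symmetric incident.
Proof. by move=> [[a b]|[a b]] [[c d]|[c d]]. Qed.

Lemma incident_irr : irreflexive incident.
Proof. by move=> [[a b]|[a b]]. Qed.

Lemma incident_is_point s t : incident s t -> is_point s != is_point t.
Proof. by case: s => [[a b]|[a b]]; case: t => [[c d]|[c d]]. Qed.

Lemma incident_triangle_free x u w : incident x u -> incident x w -> ~~ incident u w.
Proof.
by case: x => [[a b]|[a b]]; case: u => [[c d]|[c d]]; case: w => [[f g]|[f g]].
Qed.

Lemma incident_C4_free x y u w :
  incident x u -> incident x w -> incident y u -> incident y w -> u != w -> x = y.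
Proof.
case: x => [[a b]|[m c]]; case: y => [[a' b']|[m' c']];
case: u => [[a1 b1]|[m1 c1]] //; case: w => [[a2 b2]|[m2 c2]] //=.
- move=> /eqP xu /eqP xw /eqP yu /eqP yw neq_uw.
  have [[eq_m eq_c]|eq_a] :=
    nonvertical_lines_meet_once (etrans (esym xu) xw) (etrans (esym yu) yw).
    by rewrite eq_m eq_c eqxx in neq_uw.
  by subst a'; rewrite xu yu.
- move=> /eqP xu /eqP xw /eqP yu /eqP yw neq_uw.
  have [[eq_m eq_c]|eq_a] :=
    nonvertical_lines_meet_once (etrans (esym xu) yu) (etrans (esym xw) yw).
    by rewrite eq_m eq_c.
  by subst a2; rewrite xu -xw eqxx in neq_uw.
Qed.

Lemma card_incident s : #|[set t | incident s t]| = p.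
Proof.
case: s => [[a b]|[m c]].
- have -> : [set t | incident (inl (a, b)) t] =
      [set (inr (m, b - m * a)%R : vertex) | m : 'F_p].
    apply/setP => -[[x y]|[x y]]; rewrite !inE /=.
      by apply/esym/imsetP => -[z _].
    apply/idP/imsetP => [/eqP eq_b|[z _ [-> ->]]]; last by apply/eqP; ring.
    by exists x; rewrite ?in_setT // eq_b; congr (inr (_, _)); ring.
  by rewrite card_imset ?cardsT ?card_Fp // => x y [].
- have -> : [set t | incident (inr (m, c)) t] =
      [set (inl (a, m * a + c)%R : vertex) | a : 'F_p].
    apply/setP => -[[x y]|[x y]]; rewrite !inE /=; last first.
      by apply/esym/imsetP => -[z _].
    apply/idP/imsetP => [/eqP ->|[z _ [-> ->]]] //.
    by exists x; rewrite ?in_setT.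
  by rewrite card_imset ?cardsT ?card_Fp // => x y [].
Qed.

(* Hubs for the pairs at distance 3 and 4: the point (a+1, 0) serves the vertical
   line x = a, the lines of slope m+1 serve the lines of slope m. *)
Definition far_hubs (s : vertex) : {set vertex} :=
  match s with
  | inl (a, _) => [set inl (a + 1, 0)%R]
  | inr (m, _) => [set inr (m + 1, c)%R | c : 'F_p]
  end.

Definition plane_label (s : vertex) : {set vertex} :=
  s |: ([set t | incident s t] :|: far_hubs s).

Lemma card_plane_label s : (#|plane_label s| <= 1 + (p + p))%N.
Proof.
rewrite cardsU1.
have card_far : (#|far_hubs s| <= p)%N.
  case: s => [[a b]|[m c]] /=; first by rewrite cards1 prime_gt0.
  by rewrite card_imset ?cardsT ?card_Fp // => x y [].
have := cardsU [set t | incident s t] (far_hubs s); rewrite card_incident //.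
have := leq_b1 (s \notin [set t | incident s t] :|: far_hubs s); lia.
Qed.

Definition plane_graph := ord_rel incident.

Local Notation plane_walk s t := (is_walk plane_graph (enum_rank s) (enum_rank t)).

Lemma plane_graph_is_point a b :
  plane_graph a b -> is_point (enum_val a) != is_point (enum_val b).
Proof. exact: incident_is_point. Qed.

Lemma plane_walk_size_gt0 s t q : s != t -> plane_walk s t q -> (0 < size q)%N.
Proof. by rewrite -(inj_eq (@enum_rank_inj _)); apply: walk_size_gt0. Qed.

Lemma plane_walk_size_gt1 s t q : s != t -> ~~ incident s t ->
  plane_walk s t q -> (1 < size q)%N.
Proof.
by rewrite -(inj_eq (@enum_rank_inj _)) -ord_rel_rank; apply: walk_size_gt1.
Qed.

Lemma plane_walk_size_gt2 s t q : ~~ incident s t -> is_point s != is_point t ->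
  plane_walk s t q -> (2 < size q)%N.
Proof.
move=> not_st side_st; apply: (walk_size_gt2 plane_graph_is_point).
- by rewrite (inj_eq (@enum_rank_inj _)); apply: contraNneq side_st => ->.
- by rewrite /plane_graph ord_rel_rank.
- by rewrite !enum_rankK.
Qed.

Lemma plane_walk_size_gt3 s t q : s != t -> is_point s = is_point t ->
  (forall y, incident s y -> incident y t -> False) ->
  plane_walk s t q -> (3 < size q)%N.
Proof.
move=> neq_st side_st no_mid; apply: (walk_size_gt3 plane_graph_is_point).
- by rewrite (inj_eq (@enum_rank_inj _)).
- by rewrite !enum_rankK.
- by move=> y; rewrite /plane_graph /ord_rel !enum_rankK; apply: no_mid.
Qed.

Local Notation hub := (hub_between incident plane_label).

Lemma plane_label_self (s : vertex) : s \in plane_label s.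
Proof. exact: setU11. Qed.

Lemma plane_label_incident (s t : vertex) : incident s t -> t \in plane_label s.
Proof. by move=> st; rewrite !inE st orbT. Qed.

Lemma plane_label_far (s t : vertex) : t \in far_hubs s -> t \in plane_label s.
Proof. by move=> st; rewrite !inE st !orbT. Qed.

Lemma far_hubs_line (m c c' : 'F_p) : (inr (m + 1, c')%R : vertex) \in far_hubs (inr (m, c)).
Proof. exact: imset_f. Qed.

Lemma hub_self (s : vertex) : hub s s s.
Proof.
split; first by rewrite inE plane_label_self.
by exists [::]; split; rewrite ?mem_head.
Qed.

Lemma hub_incident (s t : vertex) : incident s t -> hub s t s.
Proof.
move=> st; split; first by rewrite inE plane_label_self plane_label_incident // incident_sym.
exists [:: t]; split; rewrite /= ?st ?mem_head //.
by move=> q; apply: plane_walk_size_gt0; apply: contraTneq st => ->; rewrite incident_irr.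
Qed.

(* Through (a, b) runs the line of slope m+1, a far hub of every line of slope m;
   it meets the line y = m x + c at x = c - c'. *)
Lemma hub_point_line (a b m c : 'F_p) : ~~ incident (inl (a, b)) (inr (m, c)) ->
  exists h, hub (inl (a, b)) (inr (m, c)) h /\ hub (inr (m, c)) (inl (a, b)) h.
Proof.
move=> not_inc; set c' := (b - (m + 1) * a)%R.
set h : vertex := inr (m + 1, c')%R; exists h.
set x : vertex := inl (c - c', m * (c - c') + c)%R.
have h_in : h \in plane_label (inl (a, b)) :&: plane_label (inr (m, c)).
  by rewrite inE plane_label_incident ?plane_label_far ?far_hubs_line //= /c'; apply/eqP; ring.
have ah : incident (inl (a, b)) h by rewrite /h /c' /=; apply/eqP; ring.
have hx : incident h x by rewrite /h /x /=; apply/eqP; ring.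
have h_in' := h_in; rewrite setIC in h_in'.
have xl : incident x (inr (m, c)) by rewrite /x /= eqxx.
split; split=> //.
- exists [:: h; x; inr (m, c)]; split=> //.
  + by apply/and4P.
  + by rewrite !inE eqxx orbT.
  + by move=> q; apply: plane_walk_size_gt2.
- exists [:: x; h; inl (a, b)]; split=> //.
  + by apply/and4P; split; rewrite // incident_sym.
  + by rewrite !inE eqxx !orbT.
  + by move=> q; apply: plane_walk_size_gt2; rewrite // incident_sym.
Qed.

(* Points on a common vertical line are at distance 4, joined through (a+1, 0). *)
Lemma hub_point_point (a b a' b' : 'F_p) : (inl (a, b) : vertex) != inl (a', b') ->
  exists h, hub (inl (a, b)) (inl (a', b')) h.
Proof.
move=> neq_pts; have [eq_a|neq_a] := eqVneq a a'; first subst a'.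
- have neq_b : b != b' by apply: contraNneq neq_pts => ->.
  set h : vertex := inl (a + 1, 0)%R.
  set l1 : vertex := inr (- b, b + b * a)%R; set l2 : vertex := inr (- b', b' + b' * a)%R.
  have e1 : incident (inl (a, b)) l1 by rewrite /= eq_sym; apply/eqP; ring.
  have e2 : incident l1 h by rewrite /=; apply/eqP; ring.
  have e3 : incident h l2 by rewrite /=; apply/eqP; ring.
  have e4 : incident l2 (inl (a, b')) by rewrite /= eq_sym; apply/eqP; ring.
  exists h; split; first by rewrite inE !plane_label_far //= inE.
  exists [:: l1; h; l2; inl (a, b')]; split=> //.
  + by apply/and5P.
  + by rewrite !inE eqxx !orbT.
  + move=> q; apply: plane_walk_size_gt3 => // -[//|[m c]] /eqP eq_b /eqP eq_b'.
    by rewrite eq_b eq_b' eqxx in neq_b.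
- set m := ((b - b') / (a - a'))%R; set l : vertex := inr (m, b - m * a)%R.
  have e1 : incident (inl (a, b)) l by rewrite /=; apply/eqP; ring.
  have e2 : incident l (inl (a', b')).
    rewrite /=; apply/eqP.
    have -> : (m * a' + (b - m * a) = b - m * (a - a'))%R by ring.
    by rewrite /m divfK ?subr_eq0 //; ring.
  exists l; split; first by rewrite inE !plane_label_incident // incident_sym.
  exists [:: l; inl (a', b')]; split=> //; first by apply/and3P.
  + by rewrite !inE eqxx !orbT.
  + by move=> q; apply: plane_walk_size_gt1.
Qed.

(* Parallel lines are at distance 4, joined through y = (m+1) x, which crosses
   them at x = c and x = c'. *)
Lemma hub_line_line (m c m' c' : 'F_p) : (inr (m, c) : vertex) != inr (m', c') ->
  exists h, hub (inr (m, c)) (inr (m', c')) h.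
Proof.
move=> neq_lines; have [eq_m|neq_m] := eqVneq m m'; first subst m'.
- have neq_c : c != c' by apply: contraNneq neq_lines => ->.
  set h : vertex := inr (m + 1, 0)%R.
  set x1 : vertex := inl (c, (m + 1) * c)%R; set x2 : vertex := inl (c', (m + 1) * c')%R.
  have e1 : incident (inr (m, c)) x1 by rewrite /=; apply/eqP; ring.
  have e2 : incident x1 h by rewrite /=; apply/eqP; ring.
  have e3 : incident h x2 by rewrite /=; apply/eqP; ring.
  have e4 : incident x2 (inr (m, c')) by rewrite /=; apply/eqP; ring.
  exists h; split; first by rewrite inE !plane_label_far ?far_hubs_line.
  exists [:: x1; h; x2; inr (m, c')]; split=> //.
  + by apply/and5P.
  + by rewrite !inE eqxx !orbT.
  + move=> q; apply: plane_walk_size_gt3 => // -[[x y]|//] /eqP eq_y /eqP.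
    by rewrite eq_y => /addrI eq_c; rewrite eq_c eqxx in neq_c.
- set a := ((c' - c) / (m - m'))%R; set x : vertex := inl (a, m * a + c)%R.
  have e1 : incident (inr (m, c)) x by rewrite /= eqxx.
  have e2 : incident x (inr (m', c')).
    rewrite /= /a; apply/eqP.
    have -> : (m * a + c = (m - m') * a + m' * a + c)%R by ring.
    by rewrite /a mulrC divfK ?subr_eq0 //; ring.
  exists x; split; first by rewrite inE !plane_label_incident // incident_sym.
  exists [:: x; inr (m', c')]; split=> //; first by apply/and3P.
  + by rewrite !inE eqxx !orbT.
  + by move=> q; apply: plane_walk_size_gt1.
Qed.

Lemma plane_hub_exists s t : exists h, hub s t h.
Proof.
have [<-|neq_st] := eqVneq s t; first by exists s; apply: hub_self.
have [st|not_st] := boolP (incident s t); first by exists s; apply: hub_incident.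
move: neq_st not_st; case: s => [[a b]|[m c]]; case: t => [[a' b']|[m' c']] neq_st not_st.
- exact: hub_point_point.
- by have [h [hub_st _]] := hub_point_line not_st; exists h.
- by rewrite incident_sym in not_st; have [h [_ hub_st]] := hub_point_line not_st; exists h.
- exact: hub_line_line.
Qed.

Lemma plane_graph_simple : simple_graph plane_graph.
Proof. by split=> [i j | i]; [apply: incident_sym | apply: incident_irr]. Qed.

Lemma plane_labeling_hub : is_hub_labeling plane_graph (ord_labeling plane_label).
Proof. exact/ord_labeling_hub/plane_hub_exists. Qed.

Lemma card_vertex : #|vertex| = (p * p + p * p)%N.
Proof. by rewrite card_sum card_prod card_Fp. Qed.

Lemma plane_labeling_size :
  (labeling_size (ord_labeling plane_label) <= (p * p + p * p) * (1 + (p + p)))%N.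
Proof.
rewrite -card_vertex -[X in (_ <= X * _)%N]card_ord -sum_nat_const.
by apply: leq_sum => i _; rewrite card_enum_val_preim card_plane_label.
Qed.

Lemma plane_hierarchical_size_ge L : is_hub_labeling plane_graph L -> is_hierarchical L ->
  ((p * p + p * p) * p * p.-1 <= 4 * labeling_size L)%N.
Proof.
rewrite -card_vertex; apply: hierarchical_labeling_size_ge.
- by move=> i j; apply: incident_sym.
- by move=> i; apply: incident_irr.
- by move=> x u w; apply: incident_triangle_free.
- move=> x y u w xu xw yu yw neq_uw; apply: enum_val_inj.
  by apply: (incident_C4_free xu xw yu yw); rewrite (inj_eq enum_val_inj).
- move=> i; have -> : [set j | plane_graph i j] =
      [set j | enum_val j \in [set t | incident (enum_val i) t]].
    by apply/setP => j; rewrite !inE.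
  by rewrite card_enum_val_preim card_incident.
Qed.

End AffinePlane.

Local Open Scope ring_scope.

Lemma sqrt_twice_square_le (R : rcfType) (p : nat) :
  Num.sqrt ((p * p + p * p)%N%:R : R) <= (2 * p)%N%:R.
Proof.
rewrite -[X in _ <= X]ger0_norm ?ler0n // -sqrtr_sqr ler_sqrt ?exprn_ge0 ?ler0n //.
by rewrite -natrX ler_nat; nia.
Qed.

Lemma sqrt_gap_of_size_bounds (R : rcfType) (p kHL kHHL : nat) : (2 < p)%N ->
  (kHL <= (p * p + p * p) * (1 + (p + p)))%N ->
  ((p * p + p * p) * p * p.-1 <= 4 * kHHL)%N ->
  32%:R^-1 * Num.sqrt ((p * p + p * p)%N%:R : R) * kHL%:R <= kHHL%:R.
Proof.
move=> p_gt2 le_kHL le_kHHL.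
have le_nat : (2 * p * kHL <= 32 * kHHL)%N.
  have le_deg : (4 * (1 + 2 * p) <= 16 * p.-1)%N by lia.
  apply: leq_trans (leq_mul (leqnn (2 * p)) le_kHL) _.
  have -> : (32 * kHHL = 8 * (4 * kHHL))%N by ring.
  apply: leq_trans (leq_mul (leqnn 8) le_kHHL).
  rewrite (_ : 2 * p * _ = p * p * p * (4 * (1 + 2 * p)))%N; last by ring.
  rewrite (_ : 8 * _ = p * p * p * (16 * p.-1))%N; last by ring.
  by rewrite leq_mul2l le_deg orbT.
apply: (@le_trans _ _ (32%:R^-1 * (2 * p)%N%:R * kHL%:R)).
  by rewrite ler_wpM2r ?ler0n // ler_wpM2l ?invr_ge0 ?ler0n // sqrt_twice_square_le.
by rewrite -mulrA -natrM ler_pdivrMl ?ltr0n // -natrM ler_nat.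
Qed.

Theorem mainTheorem14 (R : realType) :
  exists c : R, 0 < c /\
    forall N : nat, exists n : nat, (N <= n)%N /\
      exists e : rel 'I_n, simple_graph e /\
        exists kHL kHHL : nat,
          min_HL_size e kHL /\ min_HHL_size e kHHL /\
          c * Num.sqrt (n%:R) * kHL%:R <= kHHL%:R.
Proof.
exists 32%:R^-1; split; first by rewrite invr_gt0 ltr0n.
move=> N; have [p] := prime_above (maxn N 3); rewrite gtn_max => /andP[lt_Np lt_3p] p_prime.
exists #|vertex p|; split; first by rewrite card_vertex //; nia.
exists (@plane_graph p); split; first exact: plane_graph_simple.
have L_hub := @plane_labeling_hub p.
have [kHL minHL] := min_HL_size_exists L_hub.
have [kHHL minHHL] := min_HHL_size_exists L_hub.
exists kHL, kHHL; do 2!split=> //.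
rewrite card_vertex //; apply: sqrt_gap_of_size_bounds; first exact: ltnW.
- exact: leq_trans (minHL.2 _ L_hub) (plane_labeling_size p_prime).
- have [[L [L_hub' [L_hier <-]]] _] := minHHL.
  exact: plane_hierarchical_size_ge.
Qed.
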